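(* Suppose $V$ is time-invariant, i.e. $V\circ T=T\circ V$. Let $C\in(0,\infty)$, $\kappa\in(0,2^{1-p}|\mathbf{w}|^{-1})$ and $\Xi\in\mathcal{M}_p^{C,\kappa}(\underline{\mathcal{U}})$, and let $\mu^{\Xi}$ be the unique fixed point of $\mathcal{F}_*$ in $P^{\Xi}(\underline{\mathcal{X}}\times\underline{\mathcal{U}})\cap P^{V\text{-}\mathrm{causal}}(\underline{\mathcal{X}}\times\underline{\mathcal{U}})\cap P_p^{\mathbf{w}}(\underline{\mathcal{X}}\times\underline{\mathcal{U}})$. If $\Xi$ is stationary, i.e. $T_*\Xi=\Xi$, then $\mu^{\Xi}$ is stationary, i.e. $(T\times T)_*\mu^{\Xi}=\mu^{\Xi}$.
   Context: General conventions: $p\in[1,\infty)$ fixed; $\mathbb{Z}_-=\{\dots,-2,-1\}$; $\mathbb{N}=\{1,2,\dots\}$. Topological spaces carry Borel $\sigma$-algebras; products carry product topologies, products of metric spaces are metrized by the sum of the metrics. $P(\mathcal{Y})$: Borel probability measures; $P_p(\mathcal{Y})$: those with finite $p$-th moment. $\pi$: coordinate projections; $P^{\Xi}(\mathcal{Y}_1\times\mathcal{Y}_2)=\{\mu:(\pi_{\mathcal{Y}_2})_*\mu=\Xi\}$. $T$ denotes the time shift $T(\mathbf{y})_t=y_{t-1}$ on any sequence space $\mathcal{Y}^{\mathbb{Z}_-}$. Setting: $\mathcal{Z},\mathcal{U}$ Polish; $(\mathcal{X},d_{\mathcal{X}})$ Polish with complete metric; $f:\mathcal{X}\times\mathcal{U}\to\mathcal{X}$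 continuous. $\underline{\mathcal{Z}}=\mathcal{Z}^{\mathbb{Z}_-}$; $V:\underline{\mathcal{Z}}\to\mathcal{U}^{\mathbb{Z}_-}$ continuous and causal (if $z_s=z'_s$ for all $s\le t$ then $V(\mathbf{z})_t=V(\mathbf{z}')_t$); $\underline{\mathcal{U}}=V(\underline{\mathcal{Z}})$ Polish with a metric $d_{\underline{\mathcal{U}}}$ inducing its topology. $\mathbf{w}=(w_t)_{t\le-1}\subseteq(0,1)$ monotone, summing to $1$, $|\mathbf{w}|:=\sup_{n\in\mathbb{N}}(\sup_tw_t/w_{t-n})^{1/n}<\infty$. Fix $x_*\in\mathcal{X}$. $\underline{\mathcal{X}}=\{\mathbf{x}\in\mathcal{X}^{\mathbb{Z}_-}:\sum_tw_td_{\mathcal{X}}(x_t,x_* )<\infty\}$ with metric $d_{\underline{\mathcal{X}}}(\mathbf{x}^1,\mathbf{x}^2)=\sum_tw_td_{\mathcal{X}}(x^1_t,x^2_t)$. $F(\mathbf{x},\mathbf{u})_t=f(x_{t-1},u_t)$; standing assumption: $F$ maps $\underline{\mathcal{X}}\times\underline{\mathcal{U}}$ into $\underline{\mathcal{X}}$ continuously. $\mathcal{F}(\mathbf{x},\mathbf{u})=(F(\mathbf{x},\mathbf{u}),\mathbf{u})$. Definitions: $\Theta\in P(\underline{\mathcal{Z}})$ has $\kappa$-contractive marginals if for $\mathbf{Z}\sim\Theta$, a.s. for all $x_1,x_2\in\mathcal{X}$, $t\le-1$: $\mathbb{E}[d_{\mathcal{X}}(f(x_1,V(\mathbf{Z})_t),f(x_2,V(\mathbf{Z})_t))^p\mid(Z_s)_{s\le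 t-1}]\le\kappa d_{\mathcal{X}}(x_1,x_2)^p$. $\Xi$ is $C$-bounded if $\sum_tw_t\mathbb{E}_{\mathbf{U}\sim\Xi}[d_{\mathcal{X}}(f(x_*,U_t),x_* )^p]\le C$. $\mathcal{M}_p^{C,\kappa}(\underline{\mathcal{U}})$: $C$-bounded $\Xi\in P_p(\underline{\mathcal{U}})$ with $\Xi=V_*\Theta$ for some $\Theta$ with independent coordinates and $\kappa$-contractive marginals. $P^{V\text{-}\mathrm{causal}}(\underline{\mathcal{X}}\times\underline{\mathcal{U}})$: laws of $(\mathbf{X},V(\mathbf{Z}))$ with $\mathbf{X}$ $\underline{\mathcal{X}}$-valued, $\mathbf{Z}$ $\underline{\mathcal{Z}}$-valued with independent coordinates, and $(X_s,Z_s)_{s\le t}$ independent of $(Z_{t+1},\dots,Z_{-1})$ for all $t\le-2$. $P_p^{\mathbf{w}}(\underline{\mathcal{X}}\times\underline{\mathcal{U}})=\{\mu\in P_p(\underline{\mathcal{X}}\times\underline{\mathcal{U}}):\sum_tw_t\mathbb{E}_{\mathbf{X}\sim(\pi_{\underline{\mathcal{X}}})_*\mu}[d_{\mathcal{X}}(X_t,x_* )^p]<\infty\}$. (It is known that under these hypotheses such a unique fixed point $\mu^{\Xi}$ exists.) *)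

From HB Require Import structures.
From mathcomp Require Import all_boot all_order all_algebra.
From mathcomp Require Import all_classical all_reals all_analysis.
From mathcomp Require Import measurable_realfun lebesgue_integral probability.
Set Implicit Arguments.
Unset Strict Implicit.
Unset Printing Implicit Defensive.
Import Order.TTheory GRing.Theory Num.Theory.
Import numFieldNormedType.Exports.
Local Open Scope classical_set_scope.
Local Open Scope ring_scope.

Section generic.
Context (R : realType).

Definition is_metric {T : Type} (d : T -> T -> R) :=
  forall x y z, 0 <= d x y /\ (d x y = 0 <-> x = y) /\ d x y = d y x /\
                d x z <= d x y + d y z.

Definition metric_open {T : Type} (d : T -> T -> R) (A : set T) :=
  forall x, A x -> exists2 e, 0 < e & [set y | d x y < e] `<=` A.

Definition metric_complete {T : Type} (d : T -> T -> R) :=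
  forall u : nat -> T,
    (forall e, 0 < e -> exists N, forall m n, (N <= m)%N -> (N <= n)%N -> d (u m) (u n) < e) ->
    exists l, forall e, 0 < e -> exists N, forall n, (N <= n)%N -> d (u n) l < e.

Definition metric_separable {T : Type} (d : T -> T -> R) :=
  exists D : set T, countable D /\ forall x e, 0 < e -> exists2 y, D y & d x y < e.

Definition polish_space (T : topologicalType) :=
  exists d : T -> T -> R, [/\ is_metric d, (forall A : set T, open A <-> metric_open d A),
                             metric_complete d & metric_separable d].

Definition induces_subspace_topology (T : topologicalType) (S : set T)
  (d : {x : T | S x} -> {x : T | S x} -> R) :=
  is_metric d /\ forall A : set {x : T | S x},
    metric_open d A <-> exists2 O : set T, open O & A = [set x | O (sval x)].

Definition polish_subspace (T : topologicalType) (S : set T) :=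
  exists d, [/\ @induces_subspace_topology T S d, metric_complete d & metric_separable d].

End generic.

(** Sequences indexed by Z_- = {..., -2, -1} are encoded as functions on nat:
    index n : nat stands for time t = -(n+1). *)

Section weights.
Context (R : realType).
Local Open Scope ereal_scope.

Definition weight_seq (w : nat -> R) :=
  [/\ (forall n, (0 < w n < 1)%R),
      ({homo w : m n / (m <= n)%N >-> (n <= m)%R} \/
       {homo w : m n / (m <= n)%N >-> (m <= n)%R}) &
      \sum_(0 <= k <oo) (w k)%:E = 1].

Definition wratio_sup (w : nat -> R) (n : nat) : \bar R :=
  ereal_sup (range (fun m => (w m / w (m + n)%N)%:E)).

(** |w| = sup_{n >= 1} (sup_t w_t / w_{t-n})^(1/n)  (value +oo if some inner sup is +oo) *)
Definition wnorm (w : nat -> R) : \bar R :=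
  ereal_sup [set (match wratio_sup w n with
                  | EFin r => (r `^ (n%:R)^-1)%:E
                  | _ => +oo end) | n in [set n : nat | (0 < n)%N]].

Definition wsum (w : nat -> R) (g : nat -> R) : \bar R :=
  \sum_(0 <= k <oo) (w k * g k)%:E.

End weights.

(** time shift T(y)_t = y_{t-1} *)
Definition shift {A : Type} (y : nat -> A) : nat -> A := fun n => y n.+1.

Definition inXund {R : realType} {X : metricType R} (w : nat -> R) (xs : X)
  (x : nat -> X) := (wsum w (fun k => mdist (x k) xs) < +oo)%E.

Definition Xund {R : realType} {X : metricType R} (w : nat -> R) (xs : X) :=
  {x : nat -> X | inXund w xs x}.

Lemma inXund_cst {R : realType} {X : metricType R} (w : nat -> R) (xs : X) :
  inXund w xs (fun _ => xs).
Proof.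
rewrite /inXund /wsum.
under eq_eseriesr do rewrite mdistxx mulr0.
by rewrite eseries0 ?ltry.
Qed.

HB.instance Definition _ (R : realType) (X : metricType R) (w : nat -> R) (xs : X) :=
  gen_eqMixin (@Xund R X w xs).
HB.instance Definition _ (R : realType) (X : metricType R) (w : nat -> R) (xs : X) :=
  gen_choiceMixin (@Xund R X w xs).
HB.instance Definition _ (R : realType) (X : metricType R) (w : nat -> R) (xs : X) :=
  isPointed.Build (@Xund R X w xs) (exist _ (fun _ => xs) (inXund_cst w xs)).

Definition Uund {Z : ptopologicalType} {U : topologicalType}
  (V : {ptws nat -> Z} -> {ptws nat -> U}) := {u : {ptws nat -> U} | range V u}.

Lemma inUund {Z : ptopologicalType} {U : topologicalType}
  (V : {ptws nat -> Z} -> {ptws nat -> U}) (z : {ptws nat -> Z}) : range V (V z).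
Proof. by exists z. Qed.

Definition Vund {Z : ptopologicalType} {U : topologicalType}
  (V : {ptws nat -> Z} -> {ptws nat -> U}) (z : {ptws nat -> Z}) : Uund V :=
  exist _ (V z) (inUund V z).

HB.instance Definition _ (Z : ptopologicalType) (U : topologicalType)
  (V : {ptws nat -> Z} -> {ptws nat -> U}) := gen_eqMixin (@Uund Z U V).
HB.instance Definition _ (Z : ptopologicalType) (U : topologicalType)
  (V : {ptws nat -> Z} -> {ptws nat -> U}) := gen_choiceMixin (@Uund Z U V).
HB.instance Definition _ (Z : ptopologicalType) (U : topologicalType)
  (V : {ptws nat -> Z} -> {ptws nat -> U}) :=
  isPointed.Build (@Uund Z U V) (Vund V point).

Definition metric_borel {R : realType} {T : pointedType} (d : T -> T -> R) :=
  g_sigma_algebraType (metric_open d).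
Definition topo_borel (T : ptopologicalType) := g_sigma_algebraType (@open T).
Definition borel_sets (T : topologicalType) : set (set T) := <<s @open T >>.

Section probability_notions.
Context {R : realType} {dO : measure_display} {O : measurableType dO}.
Local Open Scope ereal_scope.

Definition sigma_of {T : Type} (Y : O -> T) (M : set (set T)) : set (set O) :=
  [set Y @^-1` B | B in M].

Definition indep_family (P : probability O R) (G : nat -> set (set O)) :=
  forall (s : seq nat) (E : nat -> set O), uniq s ->
    (forall i, i \in s -> G i (E i)) ->
    P (\big[setI/setT]_(i <- s) E i) = \big[*%E/1%E]_(i <- s) P (E i).

Definition indep2 (P : probability O R) (G1 G2 : set (set O)) :=
  forall A B, G1 A -> G2 B -> P (A `&` B) = P A * P B.

Definition cond_exp_version (P : probability O R) (G : set (set O)) (g h : O -> \bar R) :=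
  (forall B : set (\bar R), measurable B -> G (h @^-1` B)) /\
  (forall A, G A -> \int[P]_(x in A) h x = \int[P]_(x in A) g x).

End probability_notions.

Section setting.
Context {R : realType} {Z : ptopologicalType} {U : topologicalType} {X : metricType R}.
Variables (V : {ptws nat -> Z} -> {ptws nat -> U}) (dU : Uund V -> Uund V -> R)
  (w : nat -> R) (xs : X) (f : X * U -> X) (p : R).
Local Open Scope ereal_scope.

Definition causal_map :=
  forall (z z' : {ptws nat -> Z}) (n : nat),
    (forall m, (n <= m)%N -> z m = z' m) -> V z n = V z' n.
Definition time_invariant := forall z : {ptws nat -> Z}, V (shift z) = shift (V z).

Definition dXseq (x1 x2 : nat -> X) : R := fine (wsum w (fun k => mdist (x1 k) (x2 k))).
Definition dXund (x1 x2 : Xund w xs) : R := dXseq (sval x1) (sval x2).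

Definition XU := (Xund w xs * Uund V)%type.
Definition dXU (a b : XU) : R := (dXund a.1 b.1 + dU a.2 b.2)%R.

Definition ZB := g_sigma_algebraType (@open {ptws nat -> Z}).
Definition UB := metric_borel dU.
Definition XB := metric_borel dXund.
Definition XUB := metric_borel dXU.

(** F(x,u)_t = f(x_{t-1}, u_t) *)
Definition Fmap (x : nat -> X) (u : nat -> U) : nat -> X := fun n => f (x n.+1, u n).

Definition F_standing :=
  (forall a : XU, inXund w xs (Fmap (sval a.1) (sval a.2))) /\
  (forall (a : XU) (e : R), (0 < e)%R -> exists2 delta : R, (0 < delta)%R &
     forall b : XU, (dXU a b < delta)%R ->
       (dXseq (Fmap (sval a.1) (sval a.2)) (Fmap (sval b.1) (sval b.2)) < e)%R).

(** (calF)_* mu = mu, with calF(x,u) = (F(x,u), u) *)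
Definition Fcal_fixed (mu : probability XUB R) :=
  forall A : set XUB, measurable A ->
    mu [set a : XUB | exists2 b : XUB, A b &
          sval b.1 = Fmap (sval a.1) (sval a.2) /\ b.2 = a.2] = mu A.

Definition stationary_U (Xi : probability UB R) :=
  forall B : set UB, measurable B ->
    Xi [set u : UB | exists2 b : UB, B b & sval b = shift (sval u)] = Xi B.
Definition stationary_XU (mu : probability XUB R) :=
  forall A : set XUB, measurable A ->
    mu [set a : XUB | exists2 b : XUB, A b &
          sval b.1 = shift (sval a.1) /\ sval b.2 = shift (sval a.2)] = mu A.

Definition marginal_is (Xi : probability UB R) (mu : probability XUB R) :=
  forall B : set UB, measurable B -> mu [set a : XUB | B a.2] = Xi B.

Definition in_Ppw (mu : probability XUB R) :=
  (exists a0 : XUB, \int[mu]_a ((dXU a a0) `^ p)%:E < +oo) /\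
  \sum_(0 <= k <oo) ((w k)%:E * \int[mu]_a ((mdist (sval a.1 k) xs) `^ p)%:E) < +oo.

Definition V_causal (mu : probability XUB R) :=
  exists (dO : measure_display) (O : measurableType dO) (P : probability O R)
         (Xr : O -> Xund w xs) (Zr : O -> {ptws nat -> Z}),
  [/\ measurable_fun [set: O] (Xr : O -> XB),
      measurable_fun [set: O] (Zr : O -> ZB),
      indep_family P (fun n => sigma_of (fun o => Zr o n) (@borel_sets Z)),
      (forall n : nat, (0 < n)%N ->
         indep2 P
           <<s \bigcup_(m in [set m : nat | (n <= m)%N])
                 (sigma_of (fun o => sval (Xr o) m) (@borel_sets X) `|`
                  sigma_of (fun o => Zr o m) (@borel_sets Z)) >>
           <<s \bigcup_(m in [set m : nat | (m < n)%N])
                 sigma_of (fun o => Zr o m) (@borel_sets Z) >>) &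
      (forall A : set XUB, measurable A ->
         pushforward P (fun o => ((Xr o, Vund V (Zr o)) : XUB)) A = mu A)].

Definition in_S (Xi : probability UB R) (mu : probability XUB R) :=
  [/\ marginal_is Xi mu, V_causal mu & in_Ppw mu].

(** sigma((Z_s)_{s <= t-1}) on the canonical space, for t = -(n+1) *)
Definition past_sigma (n : nat) : set (set ZB) :=
  <<s \bigcup_(m in [set m : nat | (n < m)%N])
        sigma_of (fun z : ZB => z m) (@borel_sets Z) >>.

Definition kappa_contractive (kappa : R) (Theta : probability ZB R) :=
  exists h : X -> X -> nat -> ZB -> \bar R,
    (forall x1 x2 n, cond_exp_version Theta (past_sigma n)
        (fun z => ((mdist (f (x1, V z n)) (f (x2, V z n))) `^ p)%:E) (h x1 x2 n)) /\
    {ae Theta, forall z, forall x1 x2 n,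
        h x1 x2 n z <= (kappa * (mdist x1 x2) `^ p)%:E}.

Definition C_bounded (C : R) (Xi : probability UB R) :=
  \sum_(0 <= k <oo) ((w k)%:E * \int[Xi]_u ((mdist (f (xs, sval u k)) xs) `^ p)%:E)
    <= C%:E.

Definition in_M (C kappa : R) (Xi : probability UB R) :=
  [/\ C_bounded C Xi,
      (exists u0 : UB, \int[Xi]_u ((dU u u0) `^ p)%:E < +oo) &
      exists Theta : probability ZB R,
        [/\ indep_family Theta (fun n => sigma_of (fun z : ZB => z n) (@borel_sets Z)),
            kappa_contractive kappa Theta &
            forall B : set UB, measurable B ->
              Xi B = pushforward Theta (Vund V : ZB -> UB) B]].

End setting.

From Pilot Require Import Defs.
From HB Require Import structures.
From mathcomp Require Import all_boot all_order all_algebra.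
From mathcomp Require Import all_classical all_reals all_analysis.
From mathcomp Require Import measurable_realfun lebesgue_integral probability.
From mathcomp Require Import lra.
Import Order.TTheory GRing.Theory Num.Theory.
Import numFieldNormedType.Exports.
(* Re-imported so that the time shift [Defs.shift] hides the library's [shift]. *)
Import Defs.
Local Open Scope classical_set_scope.
Local Open Scope ring_scope.

(** Let [T] be the shift on both factors of [X-und x U-und] and [nu := T_* mu].
    Stationarity of [Xi] and time invariance of [V] make [nu] a law of the
    same kind as [mu]: its second marginal is [T_* Xi = Xi], it is realised
    by the shifted processes [(T X, T Z)], which are still adapted with
    independent innovations, and its moments stay finite because [|w| < oo]
    gives [w_t <= c w_(t-1)], so that [T] is [c]-Lipschitz on [X-und].
    Since [T] commutes with [calF], [nu] is again a fixed point of [calF_*],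
    and uniqueness yields [nu = mu]. *)

Lemma sval_inj_sig (T : Type) (P : T -> Prop) (x y : {t | P t}) :
  sval x = sval y -> x = y.
Proof. by case: x y => x px [y py] /= xy; exact: eq_exist. Qed.

Lemma powR_add_le {R : realType} [x y p : R] : 0 <= x -> 0 <= y -> 0 <= p ->
  (x + y) `^ p <= 2 `^ p * (x `^ p + y `^ p).
Proof.
move=> x0 y0 p0.
have xy_max : x + y <= 2 * Num.max x y.
  by rewrite mulr2n mulrDl mul1r lerD // ?le_max ?lexx ?orbT.
apply: (@le_trans _ _ ((2 * Num.max x y) `^ p)).
  by apply: ge0_ler_powR => //; rewrite nnegrE ?addr_ge0 ?mulr_ge0 // le_max x0.
rewrite powRM // ?le_max ?x0 //; apply: ler_wpM2l; first exact: powR_ge0.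
by case: (leP x y) => _; [rewrite lerDr powR_ge0 | rewrite lerDl powR_ge0].
Qed.

Lemma measurable_EFin_powR {R : realType} {d} {T : measurableType d}
  [g : T -> R] (p : R) :
  measurable_fun setT g -> measurable_fun setT (fun x => ((g x) `^ p)%:E).
Proof.
move=> mg; apply/measurable_EFinP.
exact: (measurableT_comp (measurable_powR p) mg).
Qed.

Section powR_moments.
Context {R : realType} {d} {T : measurableType d} (m : {measure set T -> \bar R}).
Local Open Scope ereal_scope.

Lemma integral_powR_lty_le_add [F G H : T -> R] (k p : R) :
  (0 <= k)%R -> (0 <= p)%R ->
  measurable_fun setT F -> measurable_fun setT G -> measurable_fun setT H ->
  (forall x, 0 <= F x)%R -> (forall x, 0 <= G x)%R -> (forall x, 0 <= H x)%R ->
  (forall x, F x <= k * G x + H x)%R ->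
  \int[m]_x ((G x) `^ p)%:E < +oo -> \int[m]_x ((H x) `^ p)%:E < +oo ->
  \int[m]_x ((F x) `^ p)%:E < +oo.
Proof.
move=> k0 p0 mF mG mH F0 G0 H0 FGH Gfin Hfin.
have GH_pow x :
    ((F x) `^ p <= (2 `^ p * k `^ p) * (G x) `^ p + 2 `^ p * (H x) `^ p)%R.
  have kG0 : (0 <= k * G x)%R by rewrite mulr_ge0.
  rewrite -mulrA -mulrDr -(powRM _ k0 (G0 x)).
  apply: le_trans _ (powR_add_le kG0 (H0 x) p0).
  by apply: ge0_ler_powR => //; rewrite nnegrE ?addr_ge0.
have cst_ge0 : (0 <= 2 `^ p * k `^ p)%R by rewrite mulr_ge0 ?powR_ge0.
have mGp := measurable_EFin_powR p mG; have mHp := measurable_EFin_powR p mH.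
apply: (@le_lt_trans _ _ (\int[m]_x ((2 `^ p * k `^ p)%:E * ((G x) `^ p)%:E +
                                     (2 `^ p)%:E * ((H x) `^ p)%:E))).
  apply: ge0_le_integral => //.
  - by move=> x _; rewrite lee_fin powR_ge0.
  - exact: measurable_EFin_powR.
  - by apply: emeasurable_funD; exact: measurable_funeM.
  - by move=> x _; rewrite -!EFinM -EFinD lee_fin.
have Zp_ge0 (g : T -> R) (a : R) x : (0 <= a)%R -> 0 <= a%:E * ((g x) `^ p)%:E.
  by move=> a0; rewrite mule_ge0 // lee_fin powR_ge0.
rewrite ge0_integralD //; do ?[exact: measurable_funeM |
  by move=> x _; apply: Zp_ge0; rewrite ?powR_ge0].
rewrite !ge0_integralZl_EFin //; do ?[exact: powR_ge0 |
  by move=> x _; rewrite lee_fin powR_ge0].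
by apply: lte_add_pinfty; apply: lte_mul_pinfty => //; rewrite lee_fin powR_ge0.
Qed.

End powR_moments.

Lemma wnorm_lty_shift_bound {R : realType} [w : nat -> R] :
  (forall k, 0 < w k) -> (wnorm w < +oo)%E ->
  exists2 c : R, 0 < c & forall k, w k <= c * w k.+1.
Proof.
move=> wpos wfin.
have ratio_ub m : ((w m / w (m + 1)%N)%:E <= wratio_sup w 1)%E.
  by apply: ereal_sup_ubound; exists m.
have : ((match wratio_sup w 1 with
         | EFin r => (r `^ (1%:R)^-1)%:E | _ => +oo end) <= wnorm w)%E.
  by apply: ereal_sup_ubound; exists 1%N.
case E: (wratio_sup w 1) => [r| |] // ratio_le.
- have r0 : 0 < r.
    have ratio0 := ratio_ub 0%N; rewrite E in ratio0.
    by rewrite -lte_fin; apply: lt_le_trans ratio0; rewrite lte_fin divr_gt0.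
  exists r => // k.
  by have := ratio_ub k; rewrite E addn1 lee_fin ler_pdivrMr.
- by move: (lt_le_trans wfin ratio_le); rewrite ltxx.
- by have := ratio_ub 0%N; rewrite E leeNy_eq.
Qed.

Section shifted_weighted_sums.
Context {R : realType} {w : nat -> R} {c : R}.
Hypotheses (wpos : forall k, 0 < w k) (c0 : 0 < c)
  (wc : forall k, w k <= c * w k.+1).
Local Open Scope ereal_scope.

Lemma nneseries_shift_le [a : nat -> \bar R] : (forall k, 0 <= a k) ->
  \sum_(0 <= k <oo) ((w k)%:E * a k.+1) <=
  c%:E * \sum_(0 <= k <oo) ((w k)%:E * a k).
Proof.
move=> a0.
have wa0 k : 0 <= (w k)%:E * a k by rewrite mule_ge0 // lee_fin ltW.
apply: (@le_trans _ _ (\sum_(0 <= k <oo) (c%:E * ((w k.+1)%:E * a k.+1)))).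
  apply: lee_nneseries => [i _ _|n _]; first by rewrite mule_ge0 // lee_fin ltW.
  by rewrite muleA -EFinM lee_wpmul2r // lee_fin.
rewrite nneseriesZl //; apply: lee_wpmul2l; first by rewrite lee_fin ltW.
have := @nneseries_addn R (fun i => (w i)%:E * a i) 1 wa0.
under eq_eseriesr do rewrite addn1.
move=> ->.
by rewrite (@nneseries_split R _ 0 1) // add0n leeDr // sume_ge0.
Qed.

Lemma wsum_ge0 [g : nat -> R] : (forall k, 0 <= g k)%R -> 0 <= wsum w g.
Proof. by move=> g0; apply: nneseries_ge0 => n _ _; rewrite lee_fin mulr_ge0 // ltW. Qed.

Lemma wsum_shift_le [g : nat -> R] : (forall k, 0 <= g k)%R ->
  wsum w (fun k => g k.+1) <= c%:E * wsum w g.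
Proof.
move=> g0; rewrite /wsum; under eq_eseriesr do rewrite EFinM.
under [X in _ <= _ * X]eq_eseriesr do rewrite EFinM.
by apply: nneseries_shift_le => // k; rewrite lee_fin.
Qed.

End shifted_weighted_sums.

Section metric_continuity.
Context {R : realType}.

Definition metric_continuous {T1 T2 : Type} (d1 : T1 -> T1 -> R)
    (d2 : T2 -> T2 -> R) (g : T1 -> T2) :=
  forall a e, 0 < e -> exists2 del, 0 < del &
    forall b, d1 a b < del -> d2 (g a) (g b) < e.

Lemma lipschitz_metric_continuous {T1 T2 : Type} [d1 : T1 -> T1 -> R]
    [d2 : T2 -> T2 -> R] [g : T1 -> T2] [k : R] :
  0 < k -> (forall a b, d2 (g a) (g b) <= k * d1 a b) ->
  metric_continuous d1 d2 g.
Proof.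
move=> k0 gk a e e0; exists (e / k); first by rewrite divr_gt0.
by move=> b h; apply: le_lt_trans (gk a b) _; rewrite mulrC -ltr_pdivlMr.
Qed.

Lemma metric_open_preimage {T1 T2 : Type} [d1 : T1 -> T1 -> R]
    [d2 : T2 -> T2 -> R] [g : T1 -> T2] [B : set T2] :
  metric_continuous d1 d2 g -> metric_open d2 B -> metric_open d1 (g @^-1` B).
Proof.
move=> gc oB a /oB [e e0 eB]; have [del del0 gdel] := gc a e e0.
by exists del => // b /gdel; exact: eB.
Qed.

Lemma metric_open_ball {T : Type} [d : T -> T -> R] (x : T) (e : R) :
  (forall x y z, d x z <= d x y + d y z) -> metric_open d [set y | d x y < e].
Proof.
move=> dtri y /= xy; exists (e - d x y); first by rewrite subr_gt0.
by move=> z /= yz; apply: le_lt_trans (dtri x y z) _; lra.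
Qed.

Lemma dist_lipschitz {T : Type} [d : T -> T -> R] (a b a0 : T) :
  (forall x y, d x y = d y x) -> (forall x y z, d x z <= d x y + d y z) ->
  `|d a a0 - d b a0| <= d a b.
Proof.
move=> dsym dtri; have := dtri a b a0; have := dtri b a a0.
by rewrite (dsym b a) ler_norml => ? ?; apply/andP; split; lra.
Qed.

Lemma measurable_metric_open_preimage {T1 T2 : pointedType}
    [d1 : T1 -> T1 -> R] [d2 : T2 -> T2 -> R] [g : T1 -> T2] :
  (forall B, metric_open d2 B -> metric_open d1 (g @^-1` B)) ->
  measurable_fun [set: metric_borel d1] (g : metric_borel d1 -> metric_borel d2).
Proof.
move=> gopen; apply: (@measurability _ _ (metric_borel d1) (metric_borel d2)
  setT g (metric_open d2)) => //.
by move=> _ [B oB <-]; rewrite setTI; apply: sub_sigma_algebra; exact: gopen.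
Qed.

Lemma metric_continuous_measurable {T1 T2 : pointedType}
    [d1 : T1 -> T1 -> R] [d2 : T2 -> T2 -> R] [g : T1 -> T2] :
  metric_continuous d1 d2 g ->
  measurable_fun [set: metric_borel d1] (g : metric_borel d1 -> metric_borel d2).
Proof.
by move=> gc; apply: measurable_metric_open_preimage => B; exact: metric_open_preimage.
Qed.

Lemma metric_continuous_measurable_real {T : pointedType} [d : T -> T -> R]
    [phi : T -> R] :
  metric_continuous d (fun x y => `|x - y|) phi ->
  measurable_fun [set: metric_borel d] phi.
Proof.
move=> phic.
have gt_open r : metric_open d (phi @^-1` [set x | r < x]).
  apply: metric_open_preimage phic _ => x /= rx; exists (x - r) => [|y /=].
    by rewrite subr_gt0.
  by rewrite ltr_norml => /andP[? ?]; lra.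
apply: (@measurability _ _ (metric_borel d) R setT phi (@ocitv R)) => //.
move=> _ [_ [[a b] _ <-] <-]; rewrite setTI.
rewrite (_ : phi @^-1` `]a, b] =
   phi @^-1` [set x | a < x] `\` phi @^-1` [set x | b < x]).
  by apply: measurableD; apply: sub_sigma_algebra.
apply/seteqP; split => x /=; rewrite in_itv /=.
  by case/andP => ax xb; split => //; apply/negP; rewrite -leNgt.
by case=> ax /negP; rewrite -leNgt => ->; rewrite ax.
Qed.

End metric_continuity.

Section weighted_sequence_metric.
Context {R : realType} {X : metricType R} {w : nat -> R} {xs : X}.
Hypothesis wpos : forall k, 0 < w k.
Local Notation XX := (Xund w xs).

Let wmdist_ge0 (x y : nat -> X) i : (0 <= (w i * mdist (x i) (y i))%:E)%E.
Proof. by rewrite lee_fin mulr_ge0 ?mdist_ge0 // ltW. Qed.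

Lemma wsum_mdist_lty (x y : XX) :
  (wsum w (fun k => mdist (sval x k) (sval y k)) < +oo)%E.
Proof.
apply: (@le_lt_trans _ _ (wsum w (fun k => mdist (sval x k) xs) +
   wsum w (fun k => mdist (sval y k) xs))%E); last first.
  exact: lte_add_pinfty (svalP x) (svalP y).
rewrite /wsum -nneseriesD; [|by move=> i _ _; exact: wmdist_ge0 ..].
apply: lee_nneseries => [i _ _|n _]; first exact: wmdist_ge0.
rewrite -EFinD lee_fin -mulrDr ler_pM2l // (metric_sym (sval y n)).
exact: metric_triangle.
Qed.

Lemma dXundE (x y : XX) :
  ((dXund x y)%:E = wsum w (fun k => mdist (sval x k) (sval y k)))%E.
Proof.
rewrite /dXund /dXseq fineK // ge0_fin_numE ?wsum_mdist_lty //.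
by apply: wsum_ge0 => // k; exact: mdist_ge0.
Qed.

Lemma dXund_ge0 (x y : XX) : 0 <= dXund x y.
Proof. by rewrite -lee_fin dXundE; apply: wsum_ge0 => // k; exact: mdist_ge0. Qed.

Lemma dXund_sym (x y : XX) : dXund x y = dXund y x.
Proof.
apply/EFin_inj; rewrite !dXundE /wsum.
by apply: eq_eseriesr => k _; rewrite metric_sym.
Qed.

Lemma dXund_triangle (x y z : XX) : dXund x z <= dXund x y + dXund y z.
Proof.
rewrite -lee_fin EFinD !dXundE /wsum -nneseriesD; [|by move=> i _ _; exact: wmdist_ge0 ..].
apply: lee_nneseries => [i _ _|n _]; first exact: wmdist_ge0.
by rewrite -EFinD lee_fin -mulrDr ler_pM2l // metric_triangle.
Qed.

Lemma mdist_coord_le (x y : XX) k :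
  w k * mdist (sval x k) (sval y k) <= dXund x y.
Proof.
rewrite -lee_fin dXundE /wsum.
apply: le_trans (nneseries_lim_ge k.+1 (fun n _ _ => wmdist_ge0 _ _ n)).
by rewrite big_nat_recr //= leeDr // sume_ge0.
Qed.

Context {c : R}.
Hypotheses (c0 : 0 < c) (wc : forall k, w k <= c * w k.+1).

Lemma inXund_shift (x : XX) : inXund w xs (shift (sval x)).
Proof.
have dist_ge0 k : 0 <= mdist (sval x k) xs by exact: mdist_ge0.
rewrite /inXund; apply: le_lt_trans (wsum_shift_le wpos c0 wc dist_ge0) _.
by apply: lte_mul_pinfty; [rewrite lee_fin ltW | by [] | exact: (svalP x)].
Qed.

Definition shiftX (x : XX) : XX := exist _ (shift (sval x)) (inXund_shift x).

Lemma dXund_shiftX (x y : XX) : dXund (shiftX x) (shiftX y) <= c * dXund x y.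
Proof.
rewrite -lee_fin EFinM !dXundE.
exact: (wsum_shift_le wpos c0 wc (fun k => mdist_ge0 (sval x k) (sval y k))).
Qed.

End weighted_sequence_metric.

Lemma shift_continuous (Z : topologicalType) :
  continuous (fun g : {ptws nat -> Z} => (shift g : {ptws nat -> Z})).
Proof.
move=> g; apply/cvg_sup; first by apply: fmap_filter; exact: nbhs_filter.
move=> i A /=; rewrite nbhsE => -[B [[C oC <-] Cg] BA].
have : nbhs g ((fun h : {ptws nat -> Z} => h i.+1) @^-1` C).
  by apply: (@proj_continuous nat (fun=> Z) i.+1 g); exact: open_nbhs_nbhs.
move=> gC; rewrite nbhs_filterE.
have : nbhs g (shift @^-1` A) by apply: filterS gC => h Ch; exact: BA.
by rewrite nbhsE.
Qed.

Lemma measurable_shiftZ (Z : ptopologicalType) :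
  measurable_fun [set: @ZB Z] (shift : ZB -> ZB).
Proof.
apply: (@measurability _ _ (@ZB Z) (@ZB Z) setT shift (@open {ptws nat -> Z})) => //.
move=> _ [B oB <-]; rewrite setTI; apply: sub_sigma_algebra.
by move: oB; apply: (proj1 (continuousP _)); exact: shift_continuous.
Qed.

Section shift_maps.
Context {R : realType} {Z : ptopologicalType} {U : topologicalType}
  {X : metricType R} {V : {ptws nat -> Z} -> {ptws nat -> U}}
  {dU : Uund V -> Uund V -> R} {w : nat -> R} {xs : X} {c : R}.
Hypotheses (wpos : forall k, 0 < w k) (c0 : 0 < c)
  (wc : forall k, w k <= c * w k.+1).
Hypotheses (TI : time_invariant V) (dU_topology : induces_subspace_topology dU).

Local Notation XU := (XU V w xs).
Local Notation sX := (shiftX wpos c0 wc).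
Local Notation dXU := (dXU dU).

Lemma range_V_shift (u : Uund V) : range V (shift (sval u)).
Proof. by case: u => v [z _ vz] /=; exists (shift z); rewrite // TI vz. Qed.

Definition shiftU (u : Uund V) : Uund V :=
  exist _ (shift (sval u)) (range_V_shift u).

Lemma shiftU_Vund z : shiftU (Vund V z) = Vund V (shift z).
Proof. by apply: sval_inj_sig; rewrite /= TI. Qed.

Definition shiftXU (a : XU) : XU := (sX a.1, shiftU a.2).

Lemma dU_ge0 u v : 0 <= dU u v.
Proof. by case: dU_topology => /(_ u v v) []. Qed.

Lemma dU_sym u v : dU u v = dU v u.
Proof. by case: dU_topology => /(_ u v v) [_ [_ []]]. Qed.

Lemma dU_triangle u v y : dU u y <= dU u v + dU v y.
Proof. by case: dU_topology => /(_ u v y) [_ [_ []]]. Qed.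

Lemma dUxx u : dU u u = 0.
Proof. by case: dU_topology => /(_ u u u) [_ [[_ ->]]]. Qed.

Lemma dXU_ge0 (a b : XU) : 0 <= dXU a b.
Proof. by rewrite /dXU addr_ge0 ?dU_ge0 ?dXund_ge0. Qed.

Lemma dXU_sym (a b : XU) : dXU a b = dXU b a.
Proof. by rewrite /dXU dXund_sym // dU_sym. Qed.

Lemma dXU_triangle (a b y : XU) : dXU a y <= dXU a b + dXU b y.
Proof. by rewrite /dXU addrACA lerD ?dU_triangle ?dXund_triangle. Qed.

Lemma dU_le_dXU (a b : XU) : dU a.2 b.2 <= dXU a b.
Proof. by rewrite /dXU lerDr dXund_ge0. Qed.

Lemma dXund_le_dXU (a b : XU) : dXund a.1 b.1 <= dXU a b.
Proof. by rewrite /dXU lerDl dU_ge0. Qed.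

(* [dU] is only known to induce the product topology on [range V], so the shift
   is handled topologically: it need not be Lipschitz for [dU]. *)
Lemma shiftU_metric_open [B] : metric_open dU B -> metric_open dU (shiftU @^-1` B).
Proof.
case: dU_topology => _ dU_open; case/dU_open => O oO ->; apply/dU_open.
exists ((fun g : {ptws nat -> U} => (shift g : {ptws nat -> U})) @^-1` O) => //.
by move: oO; apply: (proj1 (continuousP _)); exact: shift_continuous.
Qed.

Lemma shiftU_metric_continuous : metric_continuous dU dU shiftU.
Proof.
move=> u e e0.
have /(_ u) := shiftU_metric_open (metric_open_ball (shiftU u) e dU_triangle).
by rewrite /= dUxx => /(_ e0) [del del0 uball]; exists del => // v /uball.
Qed.

Lemma measurable_snd : measurable_fun [set: XUB dU w xs] (snd : XUB dU w xs -> UB dU).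
Proof.
apply: metric_continuous_measurable.
by apply: (@lipschitz_metric_continuous _ _ _ _ _ _ 1) => // a b; rewrite mul1r dU_le_dXU.
Qed.

Lemma measurable_shiftX : measurable_fun [set: XB w xs] (sX : XB w xs -> XB w xs).
Proof.
apply: metric_continuous_measurable; apply: (lipschitz_metric_continuous c0).
exact: dXund_shiftX.
Qed.

Lemma measurable_shiftU : measurable_fun [set: UB dU] (shiftU : UB dU -> UB dU).
Proof. exact: measurable_metric_open_preimage shiftU_metric_open. Qed.

Lemma measurable_shiftXU :
  measurable_fun [set: XUB dU w xs] (shiftXU : XUB dU w xs -> XUB dU w xs).
Proof.
apply: metric_continuous_measurable => a e e0.
have e20 : 0 < e / 2 by rewrite divr_gt0.
have [del2 del20 shiftU_del2] := shiftU_metric_continuous a.2 _ e20.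
have del10 : 0 < e / 2 / c by rewrite divr_gt0.
exists (Num.min (e / 2 / c) del2); first by rewrite lt_min del10 del20.
move=> b; rewrite lt_min => /andP[ab1 ab2].
have := le_lt_trans (dXund_le_dXU a b) ab1; rewrite ltr_pdivlMr // => dX_lt.
have := shiftU_del2 _ (le_lt_trans (dU_le_dXU a b) ab2).
have := dXund_shiftX wpos c0 wc a.1 b.1.
by rewrite /dXU /=; lra.
Qed.

Lemma measurable_dXU_to (a0 : XU) :
  measurable_fun [set: XUB dU w xs] (fun a : XU => dXU a a0).
Proof.
apply: metric_continuous_measurable_real.
apply: (@lipschitz_metric_continuous _ _ _ _ _ _ 1) => // a b.
by rewrite mul1r; apply: dist_lipschitz; [exact: dXU_sym | exact: dXU_triangle].
Qed.

Lemma measurable_dU_to (u0 : Uund V) :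
  measurable_fun [set: UB dU] (fun u : Uund V => dU u u0).
Proof.
apply: metric_continuous_measurable_real.
apply: (@lipschitz_metric_continuous _ _ _ _ _ _ 1) => // u v.
by rewrite mul1r; apply: dist_lipschitz; [exact: dU_sym | exact: dU_triangle].
Qed.

Lemma measurable_mdist_coord k : measurable_fun [set: XUB dU w xs]
  (fun a : XU => mdist (sval a.1 k) xs).
Proof.
apply: metric_continuous_measurable_real.
have wk0 : 0 < (w k)^-1 by rewrite invr_gt0.
apply: (lipschitz_metric_continuous wk0) => a b; rewrite ler_pdivlMl //.
apply: le_trans _ (le_trans (mdist_coord_le wpos a.1 b.1 k) (dXund_le_dXU a b)).
by rewrite ler_pM2l //; exact: dist_lipschitz _ _ _ (@metric_sym _ X) (@metric_triangle _ X).
Qed.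

Lemma dXU_shiftXU_le (a a0 : XU) (u0 : Uund V) :
  dXU (shiftXU a) (sX a0.1, u0) <= c * dXU a a0 + dU (shiftU a.2) u0.
Proof.
rewrite /dXU /= lerD2r; apply: le_trans (dXund_shiftX wpos c0 wc _ _) _.
by rewrite ler_pM2l // -/(dXU a a0) dXund_le_dXU.
Qed.

Lemma shift_preimageXU (A : set XU) :
  [set a : XU | exists2 b : XU, A b &
     sval b.1 = shift (sval a.1) /\ sval b.2 = shift (sval a.2)] =
  shiftXU @^-1` A.
Proof.
apply/seteqP; split => a /=; last by move=> Aa; exists (shiftXU a).
case=> -[b1 b2] Ab [/= b1E b2E]; suff -> : shiftXU a = (b1, b2) by [].
by congr pair; apply: sval_inj_sig.
Qed.

Lemma shift_preimageU (B : set (Uund V)) :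
  [set u : Uund V | exists2 b : Uund V, B b & sval b = shift (sval u)] =
  shiftU @^-1` B.
Proof.
apply/seteqP; split => u /=; last by move=> Bu; exists (shiftU u).
by case=> b Bb bE; suff -> : shiftU u = b by []; apply: sval_inj_sig.
Qed.

Lemma measurable_shiftXU_preimage [A : set (XUB dU w xs)] : measurable A ->
  measurable (shiftXU @^-1` A : set (XUB dU w xs)).
Proof. by move=> mA; rewrite -[X in measurable X]setTI; exact: measurable_shiftXU. Qed.

Lemma measurable_shiftU_preimage [B : set (UB dU)] : measurable B ->
  measurable (shiftU @^-1` B : set (UB dU)).
Proof. by move=> mB; rewrite -[X in measurable X]setTI; exact: measurable_shiftU. Qed.

Definition shiftXU_mfun : {mfun XUB dU w xs >-> XUB dU w xs} :=
  HB.pack (shiftXU : XUB dU w xs -> XUB dU w xs)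
    (isMeasurableFun.Build _ _ _ _ _ measurable_shiftXU).
Definition snd_mfun : {mfun XUB dU w xs >-> UB dU} :=
  HB.pack (snd : XUB dU w xs -> UB dU)
    (isMeasurableFun.Build _ _ _ _ _ measurable_snd).
Definition shiftU_mfun : {mfun UB dU >-> UB dU} :=
  HB.pack (shiftU : UB dU -> UB dU)
    (isMeasurableFun.Build _ _ _ _ _ measurable_shiftU).


Section shifted_law.
Context {f : X * U -> X} {p : R} {Xi : probability (UB dU) R}
  {mu : probability (XUB dU w xs) R}.
Hypotheses (p1 : 1 <= p) (Xi_stationary : stationary_U Xi)
  (Xi_moment : exists u0 : UB dU, (\int[Xi]_u ((dU u u0) `^ p)%:E < +oo)%E)
  (mu_marginal : marginal_is Xi mu) (mu_causal : V_causal mu)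
  (mu_Ppw : in_Ppw p mu) (mu_fixed : Fcal_fixed f mu)
  (F_in : forall a : XU, inXund w xs (Fmap f (sval a.1) (sval a.2))).

Local Notation nu := (distribution mu shiftXU_mfun).

Lemma Xi_shiftU_preimage (B : set (UB dU)) : measurable B ->
  Xi (shiftU @^-1` B) = Xi B.
Proof. by move=> mB; rewrite -shift_preimageU; exact: Xi_stationary. Qed.

Lemma shiftXU_law_marginal : marginal_is Xi nu.
Proof.
move=> B mB; change (mu [set a : XUB dU w xs | (shiftU @^-1` B) a.2] = Xi B).
by rewrite (mu_marginal _ (measurable_shiftU_preimage mB)) Xi_shiftU_preimage.
Qed.

Lemma shiftXU_law_fixed : Fcal_fixed f nu.
Proof.
move=> A mA; rewrite /distribution /pushforward.
apply: eq_trans _ (mu_fixed _ (measurable_shiftXU_preimage mA)); congr (mu _).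
apply/seteqP; split => a /=.
- case=> b Ab [b1E b2E].
  exists (exist _ (Fmap f (sval a.1) (sval a.2)) (F_in a), a.2) => //.
  suff -> : shiftXU (exist _ (Fmap f (sval a.1) (sval a.2)) (F_in a), a.2) = b by [].
  by case: b Ab b1E b2E => b1 b2 /= _ b1E ->; congr pair; apply: sval_inj_sig; rewrite b1E.
- case=> b Ab [b1E b2E]; exists (shiftXU b) => //.
  by split => /=; [rewrite b1E | rewrite b2E].
Qed.

Lemma shiftXU_law_causal : V_causal nu.
Proof.
case: mu_causal => dO [Om [P [Xr [Zr [mX mZ Z_indep past_indep law]]]]].
exists dO, Om, P, (fun o => sX (Xr o)), (fun o => (shift (Zr o) : {ptws nat -> Z})).
split.
- exact: measurableT_comp measurable_shiftX mX.
- exact: measurableT_comp (@measurable_shiftZ Z) mZ.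
- move=> s E s_uniq sE; have := Z_indep (map S s) (fun j => E j.-1).
  rewrite map_inj_uniq //; last exact: succn_inj.
  have sE' i : i \in map S s -> sigma_of (fun o => Zr o i) (@borel_sets Z) (E i.-1).
    by case/mapP => j sj ->; exact: sE.
  by move=> /(_ s_uniq sE'); rewrite !big_map.
- move=> n n0 A B hA hB; apply: (past_indep n.+1 isT).
  + move: hA; apply: sub_smallest2r; first exact: smallest_sigma_algebra.
    by move=> Y [m /= nm mY]; exists m.+1.
  + move: hB; apply: sub_smallest2r; first exact: smallest_sigma_algebra.
    by move=> Y [m /= nm mY]; exists m.+1.
- move=> A mA; apply: eq_trans _ (law _ (measurable_shiftXU_preimage mA)).
  by congr (P _); apply/seteqP; split => o /=; rewrite /shiftXU /= shiftU_Vund.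
Qed.

Lemma integral_dU_shiftU_snd (u0 : Uund V) :
  (\int[mu]_a ((dU (shiftU a.2) u0) `^ p)%:E =
   \int[Xi]_u ((dU u u0) `^ p)%:E)%E.
Proof.
pose h := fun u : UB dU => (((dU (shiftU u) u0) `^ p)%:E : \bar R).
have mh : measurable_fun setT h.
  apply: measurable_EFin_powR; exact: measurableT_comp (measurable_dU_to u0) measurable_shiftU.
have h0 u : (0 <= h u)%E by rewrite lee_fin powR_ge0.
transitivity (\int[distribution mu snd_mfun]_u h u)%E.
  by rewrite ge0_integral_distribution.
transitivity (\int[Xi]_u h u)%E.
  by apply: eq_measure_integral => A mA _; exact: mu_marginal.
transitivity (\int[distribution Xi shiftU_mfun]_u ((dU u u0) `^ p)%:E)%E.
  rewrite ge0_integral_distribution // => [|u]; last by rewrite lee_fin powR_ge0.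
  apply: measurable_EFin_powR; exact: measurable_dU_to.
by apply: eq_measure_integral => A mA _; exact: Xi_shiftU_preimage.
Qed.

Lemma shiftXU_law_moment :
  exists b0 : XUB dU w xs, (\int[nu]_b ((dXU b b0) `^ p)%:E < +oo)%E.
Proof.
case: mu_Ppw => -[a0 mu_a0] _; case: Xi_moment => u0 Xi_u0.
have p0 : 0 <= p by apply: le_trans p1.
(* As [shiftU] need not be Lipschitz for [dU], the reference point gets the
   U-component [u0], whose distance is controlled by the moment of [Xi]. *)
exists (sX a0.1, u0).
rewrite ge0_integral_distribution //; last 2 first.
- apply: measurable_EFin_powR; exact: measurable_dXU_to.
- by move=> b; rewrite lee_fin powR_ge0.
apply: (integral_powR_lty_le_add mu c p).
- exact: ltW.
- exact: p0.
- exact: measurableT_comp (measurable_dXU_to _) measurable_shiftXU.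
- exact: measurable_dXU_to.
- exact: measurableT_comp (measurable_dU_to u0)
    (measurableT_comp measurable_shiftU measurable_snd).
- by move=> a; exact: dXU_ge0.
- by move=> a; exact: dXU_ge0.
- by move=> a; exact: dU_ge0.
- by move=> a; exact: dXU_shiftXU_le.
- exact: mu_a0.
- by rewrite integral_dU_shiftU_snd.
Qed.

Lemma shiftXU_law_coord_moments :
  (\sum_(0 <= k <oo) ((w k)%:E * \int[nu]_b ((mdist (sval b.1 k) xs) `^ p)%:E)
    < +oo)%E.
Proof.
case: mu_Ppw => _ mu_coord.
pose I k := (\int[mu]_a ((mdist (sval a.1 k) xs) `^ p)%:E)%E.
have I0 k : (0 <= I k)%E by apply: integral_ge0 => a _; rewrite lee_fin powR_ge0.
have nu_coord k : (\int[nu]_a ((mdist (sval a.1 k) xs) `^ p)%:E = I k.+1)%E.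
  rewrite ge0_integral_distribution // => [|b]; last by rewrite lee_fin powR_ge0.
  apply: measurable_EFin_powR; exact: measurable_mdist_coord.
under eq_eseriesr do rewrite nu_coord.
apply: le_lt_trans (nneseries_shift_le wpos c0 wc I0) _.
by apply: lte_mul_pinfty => //; rewrite lee_fin ltW.
Qed.

Lemma shiftXU_law_in_S : in_S p Xi nu.
Proof.
split; [exact: shiftXU_law_marginal | exact: shiftXU_law_causal |].
by split; [exact: shiftXU_law_moment | exact: shiftXU_law_coord_moments].
Qed.

End shifted_law.
End shift_maps.

Theorem lemmaB4 (R : realType) (Z : ptopologicalType) (U : topologicalType)
  (X : metricType R) (f : X * U -> X)
  (V : {ptws nat -> Z} -> {ptws nat -> U}) (dU : Uund V -> Uund V -> R)
  (w : nat -> R) (xs : X) (p C kappa : R)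
  (Xi : probability (UB dU) R) (mu : probability (XUB dU w xs) R) :
  (* standing assumptions *)
  1 <= p ->
  polish_space R Z -> polish_space R U ->
  metric_complete (@mdist R X) -> metric_separable (@mdist R X) ->
  continuous f -> continuous V -> causal_map V ->
  polish_subspace R (range V) -> induces_subspace_topology dU ->
  weight_seq w -> (wnorm w < +oo)%E ->
  F_standing dU w xs f ->
  (* hypotheses of the lemma *)
  time_invariant V ->
  0 < C -> 0 < kappa -> (kappa%:E * wnorm w < (2 `^ (1 - p))%:E)%E ->
  in_M w xs f p C kappa Xi ->
  (* mu is the unique fixed point of calF_* in P^Xi /\ P^{V-causal} /\ P_p^w *)
  in_S p Xi mu -> Fcal_fixed f mu ->
  (forall nu : probability (XUB dU w xs) R,
      in_S p Xi nu -> Fcal_fixed f nu ->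
      forall A : set (XUB dU w xs), measurable A -> nu A = mu A) ->
  stationary_U Xi ->
  stationary_XU mu.
Proof.
(* The contraction and boundedness hypotheses only serve to produce the unique
   fixed point [mu], whose existence and uniqueness are assumed here. *)
move=> p1 _ _ _ _ _ _ _ _ dU_topology wseq wfin [F_in _] TI _ _ _
  [_ Xi_moment _] [mu_marginal mu_causal mu_Ppw] mu_fixed mu_unique Xi_stationary.
have wpos k : 0 < w k by case: wseq => w01 _ _; case/andP: (w01 k).
have [c c0 wc] := wnorm_lty_shift_bound wpos wfin.
move=> A mA; rewrite (shift_preimageXU wpos c0 wc TI).
have nu_S := shiftXU_law_in_S wpos c0 wc TI dU_topology p1 Xi_stationary
  Xi_moment mu_marginal mu_causal mu_Ppw.
have nu_fixed := shiftXU_law_fixed wpos c0 wc TI dU_topology mu_fixed F_in.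
exact: mu_unique _ nu_S nu_fixed _ mA.
Qed.
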